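(* Let $G$ be a signed graph. A subset $F\subseteq\mathbb{R}^n$ is a facet of $\mathrm{cone}(\mathcal{P}_G)$ if and only if there exists a facet subgraph $H$ of $G$ such that $\mathrm{cone}(\mathcal{P}_H)=F$.
   Context: A signed graph $G$ on vertex set $\{1,\dots,n\}$ is a finite undirected graph, possibly with loops but without multiple edges, together with a sign function $\mathrm{sgn}:E(G)\to\{+1,-1\}$; an edge $ij$ of sign $\pm1$ is written $\pm ij$. For an edge $e=\pm ij$ put $\rho(e)=\mathrm{sgn}(e)(e_i+e_j)\in\mathbb{R}^n$ (a loop $ii$ gives $2\,\mathrm{sgn}(ii)e_i$). $\mathcal{P}_G=\mathrm{conv}(\rho(E(G)))$, and $\mathrm{cone}(\mathcal{P}_G)$ is the set of nonnegative real linear combinations of its points; a facet is a proper face of maximal dimension. Subgraphs are spanning: a subgraph $H$ of $G$ has vertex set $\{1,\dots,n\}$ and a subset of the edges of $G$ with the same signs; $G\setminus H$ denotes the set of edges of $G$ not in $H$. A component is a maximal connected subgraph (an isolated vertex is a component). A component is bipartite if its vertex set can be partitioned into sets $L,R$ (one possibly empty) with every edge of the component having exactly one endpoint in each (a component with a loop is not bipartite). $\mathrm{bicomp}(\cdot)$ is the number of bipartite components. A subgraph $H$ of $G$ is a facet subgraph if (1) $\mathrm{bicomp}(H)=\mathrm{bicomp}(G)+1$, and (2) for any bipartite component $H'$ of $H$ which is not a component of $G$, there is a bipartition $V(H')=L\cup R$ such that every edge $e\in G\setminus H$ is either a positive edge with at least one endpoint in $L$ and no endpoint in $R$, or a negative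 edge with at least one endpoint in $R$ and no endpoint in $L$. *)

From HB Require Import structures.
From mathcomp Require Import all_boot all_order all_algebra.
Set Implicit Arguments. Unset Strict Implicit. Unset Printing Implicit Defensive.
Import Order.TTheory GRing.Theory Num.Theory.
Local Open Scope ring_scope.

(* A signed edge on vertex set 'I_n (vertices 0..n-1 represent 1..n):
   (s, i, j) with sign s (true = +1, false = -1) and endpoints i <= j
   (i = j is a loop). *)
Definition sedge (n : nat) := (bool * 'I_n * 'I_n)%type.
Definition esgn n (e : sedge n) : bool := e.1.1.
Definition eu n (e : sedge n) : 'I_n := e.1.2.
Definition ev n (e : sedge n) : 'I_n := e.2.

Definition signed_graph n (G : {set sedge n}) : Prop :=
  (forall e, e \in G -> (eu e <= ev e)%N) /\
  (forall e f, e \in G -> f \in G -> eu e = eu f -> ev e = ev f -> e = f).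

Section Geom.
Variables (R : realFieldType) (n : nat).

Definition unitv (i : 'I_n) : 'rV[R]_n := \row_k ((k == i)%:R).
Definition sgnR (s : bool) : R := if s then 1 else -1.
Definition rho (e : sedge n) : 'rV[R]_n := sgnR (esgn e) *: (unitv (eu e) + unitv (ev e)).

Definition dotv (a x : 'rV[R]_n) : R := \sum_(k < n) a 0 k * x 0 k.

Definition conv (S : 'rV[R]_n -> Prop) (x : 'rV[R]_n) : Prop :=
  exists m (v : 'I_m -> 'rV[R]_n) (c : 'I_m -> R),
    (forall k, S (v k)) /\ (forall k, 0 <= c k) /\ \sum_k c k = 1 /\
    x = \sum_k c k *: v k.
Definition cone (S : 'rV[R]_n -> Prop) (x : 'rV[R]_n) : Prop :=
  exists m (v : 'I_m -> 'rV[R]_n) (c : 'I_m -> R),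
    (forall k, S (v k)) /\ (forall k, 0 <= c k) /\ x = \sum_k c k *: v k.

Definition P_G (G : {set sedge n}) : 'rV[R]_n -> Prop :=
  conv (fun y => exists2 e, e \in G & y = rho e).
Definition coneP (G : {set sedge n}) : 'rV[R]_n -> Prop := cone (P_G G).

Definition same_set (A B : 'rV[R]_n -> Prop) : Prop := forall x, A x <-> B x.

Definition face (C F : 'rV[R]_n -> Prop) : Prop :=
  exists (a : 'rV[R]_n) (b : R),
    (forall x, C x -> dotv a x <= b) /\
    (forall x, F x <-> (C x /\ dotv a x = b)).
Definition proper_face (C F : 'rV[R]_n -> Prop) : Prop :=
  face C F /\ (exists x, F x) /\ ~ same_set F C.

(* F contains k linearly independent vectors (so dim span F >= k) *)
Definition indep_in (F : 'rV[R]_n -> Prop) (k : nat) : Prop :=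
  exists s : seq 'rV[R]_n, size s = k /\ (forall v, v \in s -> F v) /\ free s.

Definition facet (C F : 'rV[R]_n -> Prop) : Prop :=
  proper_face C F /\
  forall F', proper_face C F' -> forall k, indep_in F' k -> indep_in F k.
End Geom.

Section Comb.
Variable n : nat.
Implicit Types (G H : {set sedge n}) (V L : {set 'I_n}).

Definition adj G : rel 'I_n :=
  fun i j => [exists e in G, ((eu e == i) && (ev e == j)) || ((eu e == j) && (ev e == i))].
Definition comp G (i : 'I_n) : {set 'I_n} := [set j | connect (adj G) i j].
Definition components G : {set {set 'I_n}} := [set comp G i | i : 'I_n].

Definition is_bipartition G V L : bool :=
  (L \subset V) &&
  [forall e in G, (eu e \in V) ==> ((eu e \in L) != (ev e \in L))].
Definition bipartite G V : bool := [exists L, is_bipartition G V L].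
Definition bicomp G : nat := #|[set V in components G | bipartite G V]|.

Definition comp_of_G G H V : bool :=
  (V \in components G) && [forall e in G, (eu e \in V) ==> (e \in H)].

Definition facet_subgraph G H : Prop :=
  H \subset G /\
  bicomp H = (bicomp G).+1 /\
  (forall V, V \in components H -> bipartite H V -> ~~ comp_of_G G H V ->
     exists L, is_bipartition H V L /\
       forall e, e \in G -> e \notin H ->
         (esgn e /\ (eu e \in L \/ ev e \in L) /\
            eu e \in L :|: ~: V /\ ev e \in L :|: ~: V) \/
         (~~ esgn e /\ (eu e \in V :\: L \/ ev e \in V :\: L) /\
            eu e \in ~: L /\ ev e \in ~: L)).
End Comb.

(* The cone C_G is generated by the vectors rho(e), e in G. A valid inequality
   a.x <= 0 cuts out the face C_T, where T is the subgraph of the edges on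
   which it is tight, and dim C_T = n - bicomp T: the orthogonal complement of
   span rho(T) is spanned by the +-1 sign vectors of the bipartite components
   of T. So C_T is a facet exactly when bicomp T = bicomp G + 1; a smaller face
   can always be enlarged by tilting its hyperplane. For such a T, the sign
   vector of a bipartite component of T that is not a component of G is
   u + lam a with u orthogonal to rho(G) and lam <> 0, and the sign of lam picks
   the side required by the definition of a facet subgraph. Conversely, the
   sides given by a facet subgraph H assemble into a valid inequality that is
   tight exactly on H. *)

From Pilot Require Import Defs.
From HB Require Import structures.
From mathcomp Require Import all_boot all_order all_algebra.
From mathcomp Require Import lra zify.
Set Implicit Arguments. Unset Strict Implicit. Unset Printing Implicit Defensive.
Import Order.TTheory GRing.Theory Num.Theory.
Local Open Scope ring_scope.
Local Notation comp := Defs.comp.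

Section DotProduct.
Variables (R : realFieldType) (n : nat).
Local Notation rV := 'rV[R]_n.
Local Notation rho := (@rho R n).
Local Notation dotv := (@dotv R n).

Lemma dotvC a x : dotv a x = dotv x a.
Proof. by apply: eq_bigr => k _; rewrite mulrC. Qed.

Lemma dotvDr a x y : dotv a (x + y) = dotv a x + dotv a y.
Proof. by rewrite /dotv -big_split; apply: eq_bigr => k _; rewrite mxE mulrDr. Qed.

Lemma dotvZr a c x : dotv a (c *: x) = c * dotv a x.
Proof. by rewrite /dotv mulr_sumr; apply: eq_bigr => k _; rewrite mxE mulrCA. Qed.

Lemma dotv0r a : dotv a 0 = 0.
Proof. by rewrite /dotv big1 // => k _; rewrite mxE mulr0. Qed.

Lemma dotvDl a b x : dotv (a + b) x = dotv a x + dotv b x.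
Proof. by rewrite dotvC dotvDr -!(dotvC x). Qed.

Lemma dotvZl c a x : dotv (c *: a) x = c * dotv a x.
Proof. by rewrite dotvC dotvZr dotvC. Qed.

Lemma dotvNl a x : dotv (- a) x = - dotv a x.
Proof. by rewrite -scaleN1r dotvZl mulN1r. Qed.

Lemma dotv_sumr I (r : seq I) (P : pred I) a (F : I -> rV) :
  dotv a (\sum_(i <- r | P i) F i) = \sum_(i <- r | P i) dotv a (F i).
Proof.
rewrite /Defs.dotv exchange_big /=; apply: eq_bigr => k _.
by rewrite summxE mulr_sumr.
Qed.

Lemma dotv_self_eq0 x : dotv x x = 0 -> x = 0.
Proof.
move=> x0; apply/rowP => k; rewrite mxE; apply/eqP; rewrite -[_ == _]orbb -mulf_eq0.
apply/eqP/(psumr_eq0P (P := predT) (F := fun k => x 0 k * x 0 k)) => // i _.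
by rewrite -expr2 sqr_ge0.
Qed.

Lemma dotv_unitv a (i : 'I_n) : dotv a (unitv R i) = a 0 i.
Proof.
rewrite /dotv (bigD1 i) //= big1 => [|k /negbTE ki]; last by rewrite mxE ki mulr0.
by rewrite mxE eqxx mulr1 addr0.
Qed.

Lemma sgnR_neq0 s : sgnR R s != 0.
Proof. by case: s; rewrite /sgnR ?oppr_eq0 oner_eq0. Qed.

Lemma dotv_rho a e : dotv a (rho e) = sgnR R (esgn e) * (a 0 (eu e) + a 0 (ev e)).
Proof. by rewrite /Defs.rho dotvZr dotvDr !dotv_unitv. Qed.

Lemma dotv_rho_eq0 a e : dotv a (rho e) = 0 -> a 0 (ev e) = - a 0 (eu e).
Proof.
rewrite dotv_rho => /eqP; rewrite mulf_eq0 (negbTE (sgnR_neq0 _)) addrC addr_eq0.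
by move/eqP.
Qed.

Lemma dotv_span_eq0 (s : seq rV) a x : {in s, forall v, dotv a v = 0} ->
  x \in <<s>>%VS -> dotv a x = 0.
Proof.
move=> sa; rewrite -[s]/(tval (in_tuple s)) => /coord_span ->.
rewrite dotv_sumr big1 // => i _; rewrite dotvZr sa ?mulr0 //.
exact/mem_nth/ltn_ord.
Qed.

End DotProduct.

Section Cone.
Variables (R : realFieldType) (n : nat).
Local Notation rV := 'rV[R]_n.
Local Notation rho := (@rho R n).
Local Notation dotv := (@dotv R n).
Local Notation coneP := (@coneP R n).
Implicit Types (G H : {set sedge n}).

Definition edge_comb G (c : sedge n -> R) : rV := \sum_(e in G) c e *: rho e.
Definition nncomb G (x : rV) := exists2 c, (forall e, 0 <= c e) & x = edge_comb G c.

Lemma nncomb0 G : nncomb G 0.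
Proof. by exists (fun _ => 0) => //; rewrite /edge_comb big1 // => e _; rewrite scale0r. Qed.

Lemma nncombD G x y : nncomb G x -> nncomb G y -> nncomb G (x + y).
Proof.
move=> [c c0 ->] [d d0 ->]; exists (fun e => c e + d e); first by move=> e; rewrite addr_ge0.
by rewrite /edge_comb -big_split; apply: eq_bigr => e _; rewrite scalerDl.
Qed.

Lemma nncombZ G t x : 0 <= t -> nncomb G x -> nncomb G (t *: x).
Proof.
move=> t0 [c c0 ->]; exists (fun e => t * c e); first by move=> e; rewrite mulr_ge0.
by rewrite /edge_comb scaler_sumr; apply: eq_bigr => e _; rewrite scalerA.
Qed.

Lemma nncomb_rho G e : e \in G -> nncomb G (rho e).
Proof.
move=> eG; exists (fun f => (f == e)%:R); first by move=> f; rewrite ler0n.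
rewrite /edge_comb (bigD1 e) //= eqxx scale1r big1 ?addr0 // => f /andP [_ /negbTE ->].
by rewrite scale0r.
Qed.

Lemma nncomb_sum G m (c : 'I_m -> R) (v : 'I_m -> rV) :
  (forall k, 0 <= c k) -> (forall k, nncomb G (v k)) -> nncomb G (\sum_k c k *: v k).
Proof.
move=> c0 Gv; apply: (big_ind (nncomb G)); [exact: nncomb0 | exact: nncombD |].
by move=> k _; apply: nncombZ.
Qed.

Lemma coneP_nncomb G x : coneP G x <-> nncomb G x.
Proof.
split=> [[m [v [c [Pv [c0 ->]]]]]|[c c0 ->]].
  apply: nncomb_sum => // k; have [m' [w [d [Gw [d0 [_ ->]]]]]] := Pv k.
  by apply: nncomb_sum => // j; have [e eG ->] := Gw j; apply: nncomb_rho.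
exists #|G|, (fun k => rho (enum_val k)), (fun k => c (enum_val k)).
split; last by split=> //; rewrite /edge_comb big_enum_val.
move=> k; exists 1%N, (fun _ => rho (enum_val k)), (fun _ => 1).
split; first by move=> _; exists (enum_val k) => //; apply: enum_valP.
by split; [move=> _; apply: ler01 | rewrite !big_ord1 scale1r].
Qed.

Lemma coneP0 G : coneP G 0.
Proof. exact/coneP_nncomb/nncomb0. Qed.

Lemma coneP_rho G e : e \in G -> coneP G (rho e).
Proof. by move=> eG; apply/coneP_nncomb/nncomb_rho. Qed.

Lemma coneP_dotv a G x : coneP G x ->
  exists2 c, (forall e, 0 <= c e) & dotv a x = \sum_(e in G) c e * dotv a (rho e).
Proof.
case/coneP_nncomb=> c c0 ->; exists c => //.
by rewrite dotv_sumr; apply: eq_bigr => e _; rewrite dotvZr.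
Qed.

Definition valid G (a : rV) := forall e, e \in G -> dotv a (rho e) <= 0.
Definition tight G (a : rV) := [set e in G | dotv a (rho e) == 0].

Lemma valid_coneP G a x : valid G a -> coneP G x -> dotv a x <= 0.
Proof.
move=> Ga /(coneP_dotv a) [c c0 ->].
by apply: sumr_le0 => e eG; rewrite mulr_ge0_le0 ?Ga.
Qed.

Lemma tight_subset G a : tight G a \subset G.
Proof. by apply/subsetP => e; rewrite inE => /andP []. Qed.

Lemma valid_tight_lt0 G a e : valid G a -> e \in G -> e \notin tight G a ->
  dotv a (rho e) < 0.
Proof. by move=> Ga eG; rewrite inE eG lt_neqAle Ga // andbT. Qed.

(* A nonnegative combination lies on the hyperplane [a.x = 0] only if it
   puts no weight on the edges strictly below it. *)
Lemma coneP_tight G a x : valid G a ->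
  coneP G x /\ dotv a x = 0 <-> coneP (tight G a) x.
Proof.
move=> Ga; split=> [[/coneP_nncomb [c c0 xE] ax]|].
  apply/coneP_nncomb; exists c => //; rewrite xE /edge_comb (bigID (mem (tight G a))) /=.
  rewrite [X in _ + X]big1 ?addr0.
    by apply: eq_bigl => e; rewrite andb_idl // => /(subsetP (tight_subset G a)).
  have sum0 : \sum_(e in G) c e * dotv a (rho e) = 0.
    by rewrite -[RHS]ax xE dotv_sumr; apply: eq_bigr => f _; rewrite dotvZr.
  have cGa0 : forall e, e \in G -> c e * dotv a (rho e) = 0.
    move=> e eG; apply/eqP; rewrite -oppr_eq0; apply/eqP.
    apply: (psumr_eq0P (P := mem G) (F := fun e => - (c e * dotv a (rho e)))) => //.
      by move=> f fG; rewrite oppr_ge0 mulr_ge0_le0 // Ga.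
    by rewrite sumrN sum0 oppr0.
  move=> e /andP [eG eT]; have /eqP := cGa0 e eG.
  by rewrite mulf_eq0 (lt_eqF (valid_tight_lt0 Ga eG eT)) orbF => /eqP ->; rewrite scale0r.
move=> Tx; split.
  case/coneP_nncomb: Tx => c c0 ->; apply/coneP_nncomb.
  exists (fun e => if e \in tight G a then c e else 0) => [e|]; first by case: ifP.
  rewrite /edge_comb [RHS](bigID (mem (tight G a))) /= [X in _ = _ + X]big1 ?addr0.
    rewrite [RHS](eq_bigl (mem (tight G a))); last first.
      by move=> e; rewrite andb_idl // => /(subsetP (tight_subset G a)).
    by apply: eq_bigr => e ->.
  by move=> e /andP [_ /negbTE ->]; rewrite scale0r.
case: (coneP_dotv a Tx) => c _ ->; rewrite big1 // => e.
by rewrite inE => /andP [_ /eqP ->]; rewrite mulr0.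
Qed.

End Cone.

Section EdgeSpaces.
Variables (R : realFieldType) (n : nat).
Local Notation rV := 'rV[R]_n.
Local Notation rho := (@rho R n).
Local Notation dotv := (@dotv R n).
Local Notation coneP := (@coneP R n).
Implicit Types (G H : {set sedge n}).

Definition rhos H : seq rV := [seq rho e | e <- enum H].
Definition edge_span H : {vspace rV} := <<rhos H>>%VS.
(* The orthogonal complement of [edge_span H], presented as the kernel of the
   Gram map [a |-> \sum_e (a.rho e) rho e] so that rank-nullity applies. *)
Definition gram H : 'M[R]_n := \sum_(e in H) (rho e)^T *m rho e.
Definition gram_map H : 'End(rV) := linfun (mulmxr (gram H)).
Definition edge_orth H : {vspace rV} := lker (gram_map H).

Lemma memv_edge_span H e : e \in H -> rho e \in edge_span H.
Proof. by move=> eH; apply/memv_span/map_f; rewrite mem_enum. Qed.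

Lemma edge_spanS G H : H \subset G -> (edge_span H <= edge_span G)%VS.
Proof.
move=> HG; apply/span_subvP => v /mapP [e]; rewrite mem_enum => eH ->.
exact/memv_edge_span/(subsetP HG).
Qed.

Lemma coneP_edge_span H x : coneP H x -> x \in edge_span H.
Proof.
case/coneP_nncomb=> c _ ->; apply: rpred_sum => e eH.
exact/rpredZ/memv_edge_span.
Qed.

Lemma gram_mapE H a :
  gram_map H a = \sum_(e in H) dotv a (rho e) *: rho e.
Proof.
rewrite lfunE /= /gram mulmx_sumr; apply: eq_bigr => e _.
rewrite mulmxA [a *m _]mx11_scalar mul_scalar_mx; congr (_ *: _).
by rewrite !mxE; apply: eq_bigr => k _; rewrite mxE.
Qed.

Lemma memv_edge_orth H a :
  (a \in edge_orth H) <-> (forall e, e \in H -> dotv a (rho e) = 0).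
Proof.
rewrite memv_ker gram_mapE; split=> [/eqP aH e eH|aH]; last first.
  by rewrite big1 // => e eH; rewrite aH // scale0r.
have sq0 : \sum_(e in H) dotv a (rho e) ^+ 2 = 0.
  rewrite -[RHS](dotv0r a) -aH dotv_sumr.
  by apply: eq_bigr => f _; rewrite dotvZr expr2.
apply/eqP; rewrite -sqrf_eq0; apply/eqP.
by apply: (psumr_eq0P (P := mem H) (F := fun e => dotv a (rho e) ^+ 2)) => // f _; rewrite sqr_ge0.
Qed.

Lemma edge_orthS G H : H \subset G -> (edge_orth G <= edge_orth H)%VS.
Proof.
move=> HG; apply/subvP => a /memv_edge_orth aG; apply/memv_edge_orth => e eH.
exact/aG/(subsetP HG).
Qed.

Lemma memv_tight_orth G a : a \in edge_orth (tight G a).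
Proof. by apply/memv_edge_orth => e; rewrite inE => /andP [_ /eqP]. Qed.

Lemma edge_orth_dotv H a x : a \in edge_orth H -> x \in edge_span H -> dotv a x = 0.
Proof.
move/memv_edge_orth=> aH; apply: dotv_span_eq0 => v /mapP [e].
by rewrite mem_enum => eH ->; apply: aH.
Qed.

Lemma dim_edge_span_orth H : (\dim (edge_span H) + \dim (edge_orth H) = n)%N.
Proof.
have dimf : \dim (fullv : {vspace rV}) = n by rewrite dimvf /dim /= mul1n.
apply/eqP; rewrite eqn_leq; apply/andP; split.
  rewrite -dimv_sum_cap.
  have -> : (edge_span H :&: edge_orth H = 0)%VS.
    apply/eqP; rewrite -subv0; apply/subvP => x; rewrite memv_cap => /andP [xU xW].
    rewrite memv0; apply/eqP; apply: dotv_self_eq0; exact: edge_orth_dotv xW xU.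
  by rewrite dimv0 addn0 -[X in (_ <= X)%N]dimf; apply/dimvS/subvf.
have dimE := limg_ker_dim (gram_map H) fullv; rewrite capfv in dimE.
rewrite -[X in (X <= _)%N]dimf -dimE addnC leq_add2r; apply: dimvS; apply/subvP => y /memv_imgP [u _ ->].
by rewrite gram_mapE; apply: rpred_sum => e eH; apply/rpredZ/memv_edge_span.
Qed.

End EdgeSpaces.

Section Components.
Variable n : nat.
Implicit Types (G H : {set sedge n}) (V L : {set 'I_n}) (i j k x y : 'I_n).

Lemma adj_sym H : symmetric (adj H).
Proof.
by move=> i j; apply/existsP/existsP => -[e /andP [eH ije]]; exists e; rewrite eH orbC.
Qed.

Lemma connect_adjC H i j : connect (adj H) i j = connect (adj H) j i.
Proof. exact: (sym_connect_sym (adj_sym H)). Qed.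

Lemma comp_id H i : i \in comp H i.
Proof. by rewrite inE connect0. Qed.

Lemma comp_eq H i j : j \in comp H i -> comp H j = comp H i.
Proof.
rewrite inE => ij; apply/setP => k; rewrite !inE; apply/idP/idP => ik.
  exact: connect_trans ij ik.
by rewrite connect_adjC in ij; apply: connect_trans ij ik.
Qed.

Lemma mem_components H i : comp H i \in components H.
Proof. exact: imset_f. Qed.

Lemma componentsE H V k : V \in components H -> k \in V -> V = comp H k.
Proof. by case/imsetP => i _ -> /comp_eq ->. Qed.

Lemma components_neq0 H V : V \in components H -> V != set0.
Proof. by case/imsetP => i _ ->; apply/set0Pn; exists i; apply: comp_id. Qed.

Lemma adj_edge H e : e \in H -> adj H (eu e) (ev e).
Proof. by move=> eH; apply/existsP; exists e; rewrite eH !eqxx. Qed.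

Lemma adjP H x y : adj H x y ->
  exists2 e, e \in H & (eu e = x /\ ev e = y) \/ (eu e = y /\ ev e = x).
Proof.
by case/existsP => e /andP [eH /orP [] /andP [/eqP ux /eqP vy]]; exists e => //; [left|right].
Qed.

Lemma components_closed H V e : V \in components H -> e \in H ->
  (eu e \in V) = (ev e \in V).
Proof.
case/imsetP=> i _ -> eH; rewrite !inE; have uv := connect1 (adj_edge eH).
apply/idP/idP => iu; first exact: connect_trans iu uv.
by rewrite connect_adjC in uv; apply: connect_trans iu uv.
Qed.

Lemma comp_ind H i (P : 'I_n -> Prop) : P i ->
  (forall y x, y \in comp H i -> x \in comp H i -> adj H y x -> P y -> P x) ->
  forall j, j \in comp H i -> P j.
Proof.
move=> Pi Pstep j; rewrite inE => /connectP [p pth ->].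
elim/last_ind: p pth => [|p x IHp] //=.
rewrite rcons_path last_rcons => /andP [pth ax].
have yi : last i p \in comp H i by rewrite inE; apply/connectP; exists p.
apply: (Pstep (last i p)) => //; last exact: IHp.
by rewrite inE; apply: connect_trans (connect1 ax); rewrite -inE.
Qed.

Lemma bipartitionC H V L : V \in components H -> is_bipartition H V L ->
  is_bipartition H V (V :\: L).
Proof.
move=> Vc /andP [_ /forallP VL]; rewrite /is_bipartition subsetDl.
apply/forallP => e; apply/implyP => eH; apply/implyP => uV.
have vV : ev e \in V by rewrite -(components_closed Vc eH).
move: (VL e); rewrite eH uV /= => uvL.
by rewrite !inE uV vV /= !andbT; apply: contra_neq uvL => /negb_inj.
Qed.

(* The side is normalised to contain the chosen root of [V], so that the
   coordinate of a vector of [edge_orth H] along the sign vector of [V] is its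
   value at the root. *)
Definition comp_root V := [pick i in V].
Definition some_side H V := odflt set0 [pick L | is_bipartition H V L].
Definition rooted_side H V :=
  if comp_root V is Some r then
    if r \in some_side H V then some_side H V else V :\: some_side H V
  else some_side H V.

Lemma rooted_side_bipartition H V : V \in components H -> bipartite H V ->
  is_bipartition H V (rooted_side H V).
Proof.
move=> Vc /existsP bV; have VS : is_bipartition H V (some_side H V).
  by rewrite /some_side; case: pickP => [//|noL]; case: bV => L; rewrite noL.
rewrite /rooted_side; case: (comp_root V) => // r.
by case: ifP => // _; apply: bipartitionC.
Qed.

Lemma rooted_sideP H V : V \in components H ->
  exists r, [/\ comp_root V = Some r, r \in V & r \in rooted_side H V].
Proof.
move=> Vc; have /set0Pn [x xV] := components_neq0 Vc.
rewrite /rooted_side /comp_root; case: pickP => [r rV|noV]; last by move: (noV x); rewrite xV.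
by exists r; split=> //; case: ifP => // /negbT rS; rewrite inE rS.
Qed.

End Components.

Section OrthDimension.
Variables (R : realFieldType) (n : nat).
Local Notation rV := 'rV[R]_n.
Local Notation rho := (@rho R n).
Local Notation dotv := (@dotv R n).
Local Notation edge_orth := (@edge_orth R n).
Implicit Types (G H : {set sedge n}) (V L : {set 'I_n}) (i j k x y : 'I_n).

Definition sign_vec V L : rV := \row_k (if k \in V then (if k \in L then 1 else -1) else 0).

Lemma sign_vecE V L k :
  (sign_vec V L) 0 k = if k \in V then (if k \in L then 1 else -1) else 0.
Proof. by rewrite mxE. Qed.

Lemma sign_vecC V L : L \subset V -> sign_vec V (V :\: L) = - sign_vec V L.
Proof.
move=> LV; apply/rowP => k; rewrite !mxE !inE.
by case: (k \in V); case: (k \in L); rewrite /= ?opprK ?oppr0.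
Qed.

Lemma sign_vec_orth H V L : V \in components H -> is_bipartition H V L ->
  sign_vec V L \in edge_orth H.
Proof.
move=> Vc /andP [_ /forallP VL]; apply/memv_edge_orth => e eH.
rewrite dotv_rho !sign_vecE -(components_closed Vc eH).
case: ifP => uV; last by rewrite addr0 mulr0.
move: (VL e); rewrite eH uV /=.
by case: (eu e \in L); case: (ev e \in L) => //= _; rewrite ?subrr ?addNr mulr0.
Qed.

Lemma edge_orth_alternating H i L a : a \in edge_orth H ->
  is_bipartition H (comp H i) L -> forall j, j \in comp H i ->
  a 0 j = if (j \in L) == (i \in L) then a 0 i else - a 0 i.
Proof.
move=> /memv_edge_orth aH /andP [_ /forallP iL]; apply: comp_ind; first by rewrite eqxx.
move=> y x yi xi /adjP [e eH exy] ay.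
have ae := dotv_rho_eq0 (aH e eH).
have [yxL ax] : ((y \in L) != (x \in L)) /\ a 0 x = - a 0 y.
  by case: exy => -[eu_ ev_]; move: (iL e); rewrite eH eu_ ev_ ?yi ?xi /= => ?;
    rewrite eu_ ev_ in ae; rewrite ?ae ?opprK; split=> //; rewrite eq_sym.
rewrite ax ay; move: yxL.
by case: (y \in L); case: (x \in L); case: (i \in L) => //= _; rewrite opprK.
Qed.

Lemma edge_orth_nonbipartite H i a : a \in edge_orth H ->
  ~~ bipartite H (comp H i) -> a 0 i = 0.
Proof.
move=> aH; apply: contraNeq => ai0; apply/existsP.
exists [set j in comp H i | a 0 j == a 0 i]; apply/andP; split.
  by apply/subsetP => j; rewrite inE => /andP [].
have apm : forall j, j \in comp H i -> a 0 j = a 0 i \/ a 0 j = - a 0 i.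
  move: aH => /memv_edge_orth aH; apply: comp_ind; first by left.
  move=> y x _ _ /adjP [e eH exy] ay; have ae := dotv_rho_eq0 (aH e eH).
  have -> : a 0 x = - a 0 y by case: exy => -[<- <-]; rewrite ae ?opprK.
  by case: ay => ->; [right|left; rewrite opprK].
have neq : - a 0 i != a 0 i by apply: contra_neq ai0 => ?; lra.
apply/forallP => e; apply/implyP => eH; apply/implyP => ui.
have vi : ev e \in comp H i by rewrite -(components_closed (mem_components H i) eH).
have := apm _ ui; have := dotv_rho_eq0 ((iffLR (memv_edge_orth _ _)) aH e eH).
by move: ui vi; rewrite !inE => -> -> /= -> [] ->; rewrite ?opprK eqxx (negbTE neq).
Qed.

Definition bip_components H := [set V in components H | bipartite H V].
Definition sign_basis H :=
  [seq sign_vec V (rooted_side H V) | V <- enum (bip_components H)].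
Definition root_coef (a : rV) V := if comp_root V is Some r then a 0 r else 0.

Lemma bip_componentsP H V : V \in bip_components H ->
  V \in components H /\ bipartite H V.
Proof. by rewrite inE => /andP. Qed.

Lemma bip_components_notin H V k : V \in bip_components H -> V != comp H k ->
  k \notin V.
Proof. by move=> /bip_componentsP [Vc _]; apply: contra_neqN => /(componentsE Vc). Qed.

Lemma edge_orth_expansion H a : a \in edge_orth H ->
  a = \sum_(V in bip_components H) root_coef a V *: sign_vec V (rooted_side H V).
Proof.
move=> aH; apply/rowP => k; rewrite summxE.
have [kB|kB] := boolP (comp H k \in bip_components H); last first.
  rewrite big1 => [|V VB]; last first.
    by rewrite !mxE (negbTE (bip_components_notin VB _)) ?mulr0 //; apply: contraNneq kB => <-.
  apply: edge_orth_nonbipartite aH _.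
  by apply: contra kB => kbip; rewrite inE mem_components.
rewrite (bigD1 (comp H k)) //= big1 ?addr0 => [|V /andP [VB Vk]]; last first.
  by rewrite !mxE (negbTE (bip_components_notin VB Vk)) mulr0.
have [Kc Kbip] := bip_componentsP kB.
have [r [rootE rK rL]] := rooted_sideP Kc.
have Kr := comp_eq rK.
have rbip : is_bipartition H (comp H r) (rooted_side H (comp H k)).
  by rewrite Kr; apply: rooted_side_bipartition.
rewrite !mxE comp_id /root_coef rootE (edge_orth_alternating aH rbip) ?Kr ?comp_id // rL.
by case: (k \in _); rewrite /= ?mulr1 ?mulrN1.
Qed.

Lemma sign_basis_free H : free (sign_basis H).
Proof.
rewrite -[sign_basis H]/(tval (in_tuple (sign_basis H))); apply/freeP => c c0 i.
have size_enum (j : 'I_(size (sign_basis H))) : (j < size (enum (bip_components H)))%N.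
  by rewrite -(size_map (fun V => sign_vec V (rooted_side H V))).
pose B (j : 'I_(size (sign_basis H))) := nth set0 (enum (bip_components H)) j.
have BB (j : 'I_(size (sign_basis H))) : B j \in bip_components H.
  by rewrite -mem_enum mem_nth.
have [r [_ rB rL]] := rooted_sideP (proj1 (bip_componentsP (BB i))).
have := congr1 (fun v : rV => v 0 r) c0; rewrite summxE mxE (bigD1 i) //= big1.
  by rewrite addr0 mxE /sign_basis (nth_map set0) ?size_enum // -/(B i) !mxE rB rL mulr1.
move=> j ji; rewrite mxE /sign_basis (nth_map set0) ?size_enum // -/(B j) !mxE.
have BjBi : B j != B i.
  by rewrite /B nth_uniq ?enum_uniq.
by rewrite (componentsE (proj1 (bip_componentsP (BB i))) rB) in BjBi;
  rewrite (negbTE (bip_components_notin (BB j) BjBi)) mulr0.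
Qed.

Lemma edge_orth_sign_basis H : edge_orth H = <<sign_basis H>>%VS.
Proof.
apply/eqP; rewrite eqEsubv; apply/andP; split.
  apply/subvP => a aH; rewrite (edge_orth_expansion aH).
  by apply: rpred_sum => V VB; apply/rpredZ/memv_span/map_f; rewrite mem_enum.
apply/span_subvP => v /mapP [V]; rewrite mem_enum => /bip_componentsP [Vc Vbip] ->.
exact/sign_vec_orth/rooted_side_bipartition.
Qed.

Lemma dim_edge_orth H : \dim (edge_orth H) = bicomp H.
Proof.
by rewrite edge_orth_sign_basis (eqP (sign_basis_free H)) size_map -cardE.
Qed.

End OrthDimension.

Section Faces.
Variables (R : realFieldType) (n : nat).
Local Notation rV := 'rV[R]_n.
Local Notation rho := (@rho R n).
Local Notation dotv := (@dotv R n).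
Local Notation coneP := (@coneP R n).
Local Notation edge_span := (@edge_span R n).
Local Notation edge_orth := (@edge_orth R n).
Implicit Types (G H : {set sedge n}) (U Z : {vspace rV}) (F : rV -> Prop).

Lemma dimv_lt_mem U Z v : (U <= Z)%VS -> v \in Z -> v \notin U -> (\dim U < \dim Z)%N.
Proof.
move=> UZ vZ; apply: contraNT; rewrite -leqNgt => ZU.
by have /eqP -> : U == Z by rewrite eqEdim UZ.
Qed.

Lemma dimv_lt_notin U Z : (\dim Z < \dim U)%N -> exists2 w, w \in U & w \notin Z.
Proof.
move=> ZU; have [/allP UZ|/allPn [w wU wZ]] := boolP (all (mem Z) (vbasis U)).
  by move: ZU; rewrite ltnNge dimvS // -(span_basis (vbasisP U)); apply/span_subvP.
by exists w => //; apply: vbasis_mem.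
Qed.

Lemma free_subseq_span (X : seq rV) :
  exists2 s, {subset s <= X} & free s /\ <<s>>%VS = <<X>>%VS.
Proof.
elim: X => [|x X [s sX [fs sXE]]]; first by exists [::]; [|split; [apply: nil_free|]].
have [xs|xs] := boolP (x \in <<s>>%VS).
  exists s => [v /sX|]; first by rewrite inE orbC => ->.
  split=> //; rewrite span_cons -sXE; apply/esym/addv_idPr; rewrite -memvE //.
exists (x :: s) => [v|]; first by rewrite !inE => /orP [->|/sX ->]; rewrite ?orbT.
by rewrite free_cons xs span_cons sXE -span_cons.
Qed.

Lemma indep_coneP H k : indep_in (coneP H) k <-> (k <= \dim (edge_span H))%N.
Proof.
split=> [[s [<- [sH fs]]]|kH].
  rewrite -(eqP fs); apply/dimvS/span_subvP => v /sH; exact: coneP_edge_span.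
have [s sX [fs sXE]] := free_subseq_span (rhos R H).
have sdim : size s = \dim (edge_span H) by rewrite /edge_span -sXE (eqP fs).
exists (take k s); split; first by rewrite size_take sdim; case: ltngtP kH => // ->.
split; last by move: fs; rewrite -{1}(cat_take_drop k s); apply: catl_free.
by move=> v /mem_take /sX /mapP [e]; rewrite mem_enum => eH ->; apply: coneP_rho.
Qed.

Lemma facet_ext C F F' : same_set F F' -> facet C F -> facet C F'.
Proof.
move=> FF' [[[a [b [Cab Fab]]] [[x Fx] FC]] Fmax]; split; first split.
- by exists a, b; split=> // x'; rewrite -FF'.
- split; first by exists x; apply/FF'.
  by move=> F'C; apply: FC => x'; rewrite FF'.
- move=> F'' F''p k /(Fmax _ F''p) [s [sk [sF fs]]].
  by exists s; split=> //; split=> // v /sF /FF'.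
Qed.

Lemma tight_span_lt G a : a \notin edge_orth G ->
  (\dim (edge_span (tight G a)) < \dim (edge_span G))%N.
Proof.
move=> aG; have := dim_edge_span_orth R (tight G a); have := dim_edge_span_orth R G.
have := dimv_lt_mem (edge_orthS R (tight_subset G a)) (memv_tight_orth G a) aG.
by lia.
Qed.

Lemma proper_face_tight G F : proper_face (coneP G) F ->
  exists a, [/\ valid G a, a \notin edge_orth G & same_set F (coneP (tight G a))].
Proof.
move=> [[a [b [Cab Fab]]] [[x /Fab [Cx ax]] FC]].
(* [b = 0] because the cone contains [0] and every positive multiple of [x]. *)
have b0 : b = 0.
  have := Cab 0 (coneP0 R G); rewrite dotv0r => b_ge0.
  have C2x : coneP G (2%:R *: x) by apply/coneP_nncomb/nncombZ/coneP_nncomb; rewrite ?ler0n.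
  by have := Cab _ C2x; rewrite dotvZr ax => ?; lra.
rewrite {}b0 in Cab Fab; have Ga : valid G a by move=> e eG; apply/Cab/coneP_rho.
exists a; split=> // [|y]; last by rewrite Fab coneP_tight.
apply/negP => /memv_edge_orth aG; apply: FC => y; rewrite Fab; split=> [[]//|Cy].
by split=> //; apply: edge_orth_dotv (coneP_edge_span Cy); apply/memv_edge_orth.
Qed.

Lemma proper_face_indep_lt G F k : proper_face (coneP G) F -> indep_in F k ->
  (k < \dim (edge_span G))%N.
Proof.
case/proper_face_tight=> a [Ga aG FE] [s [sk [sF fs]]].
apply: leq_trans (tight_span_lt aG); rewrite ltnS; apply/indep_coneP.
by exists s; split=> //; split=> // v /sF /FE.
Qed.

Lemma proper_face_valid G a : valid G a -> a \notin edge_orth G ->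
  proper_face (coneP G) (coneP (tight G a)).
Proof.
move=> Ga aG; split; first by exists a, 0; split=> [x|x]; [apply: valid_coneP | rewrite coneP_tight].
split; first by exists 0; apply: coneP0.
move=> TG; case/negP: aG; apply/memv_edge_orth => e eG.
by have /TG /(coneP_tight _ Ga) [] := coneP_rho R eG.
Qed.

Lemma facet_valid G a : valid G a -> a \notin edge_orth G ->
  (\dim (edge_span (tight G a))).+1 = \dim (edge_span G) ->
  facet (coneP G) (coneP (tight G a)).
Proof.
move=> Ga aG dimE; split; first exact: proper_face_valid.
move=> F Fp k /(proper_face_indep_lt Fp); rewrite -dimE ltnS.
by move/indep_coneP.
Qed.

End Faces.

Lemma facet_dim_bicomp (R : realFieldType) n (G H : {set sedge n}) :
  (\dim (edge_span R H)).+1 = \dim (edge_span R G) <-> bicomp H = (bicomp G).+1.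
Proof.
have := dim_edge_span_orth R H; have := dim_edge_span_orth R G.
by rewrite !dim_edge_orth; split; lia.
Qed.

Section SideCondition.
Variable n : nat.
Implicit Types (V L : {set 'I_n}) (e : sedge n).

Definition side_cond V L e : Prop :=
  (esgn e /\ (eu e \in L \/ ev e \in L) /\
     eu e \in L :|: ~: V /\ ev e \in L :|: ~: V) \/
  (~~ esgn e /\ (eu e \in V :\: L \/ ev e \in V :\: L) /\
     eu e \in ~: L /\ ev e \in ~: L).

Definition side_condb V L e : bool :=
  (esgn e && ((eu e \in L) || (ev e \in L)) &&
     (eu e \in L :|: ~: V) && (ev e \in L :|: ~: V)) ||
  (~~ esgn e && ((eu e \in V :\: L) || (ev e \in V :\: L)) &&
     (eu e \in ~: L) && (ev e \in ~: L)).

Lemma side_condP V L e : reflect (side_cond V L e) (side_condb V L e).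
Proof.
apply: (iffP orP).
  by case=> /andP [/andP [/andP [s1 /orP uvL] uL] vL]; [left|right].
case=> [[s1 [uvL [uL vL]]]|[s1 [uvL [uL vL]]]]; [left|right]; rewrite s1 uL vL !andbT /=;
  by case: uvL => ->; rewrite ?orbT.
Qed.

End SideCondition.

Section FacetSubgraphNormal.
Variables (R : realFieldType) (n : nat) (G H : {set sedge n}).
Local Notation rV := 'rV[R]_n.
Local Notation rho := (@rho R n).
Local Notation dotv := (@dotv R n).
Implicit Types (V L : {set 'I_n}) (e : sedge n) (x : 'I_n).

Hypothesis GH : facet_subgraph G H.

Definition special V := [&& V \in components H, bipartite H V & ~~ comp_of_G G H V].
Definition good_side V L :=
  is_bipartition H V L && [forall e, (e \in G) && (e \notin H) ==> side_condb V L e].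
Definition chosen_side V := odflt set0 [pick L | good_side V L].

Definition facet_normal : rV :=
  \row_k (if special (comp H k) then (if k \in chosen_side (comp H k) then -1 else 1) else 0).

Lemma chosen_sideP V : special V -> good_side V (chosen_side V).
Proof.
case/and3P=> Vc Vbip VG; rewrite /chosen_side; case: pickP => [//|noL].
have [_ [_ Hside]] := GH; have [L [VL Lcond]] := Hside V Vc Vbip VG.
move: (noL L); rewrite /good_side VL; move/negP; case; apply/forallP => e.
by apply/implyP => /andP [eG eH]; apply/side_condP/Lcond.
Qed.

(* Otherwise every bipartite component of [H] would be one of [G]. *)
Lemma exists_special : exists V, special V.
Proof.
have [_ [bicompE _]] := GH; apply/existsP; apply: contraT => /existsPn noV.
have : (#|bip_components H| <= #|bip_components G|)%N.
  apply/subset_leq_card/subsetP => V; rewrite !inE => /andP [Vc Vbip].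
  move: (noV V); rewrite /special Vc Vbip negbK => /andP [VG /forallP VH].
  rewrite VG; case/existsP: Vbip => L /andP [LV /forallP VL]; apply/existsP; exists L.
  rewrite /is_bipartition LV; apply/forallP => e; apply/implyP => eG; apply/implyP => uV.
  have eH : e \in H by move: (VH e); rewrite eG uV.
  by move: (VL e); rewrite eH uV.
by rewrite -/(bicomp H) -/(bicomp G) bicompE ltnn.
Qed.

Lemma facet_normal_H e : e \in H -> dotv facet_normal (rho e) = 0.
Proof.
move=> eH; rewrite dotv_rho !mxE.
have -> : comp H (ev e) = comp H (eu e).
  by apply: comp_eq; rewrite -(components_closed (mem_components _ _) eH) comp_id.
case: ifP => Vsp; last by rewrite addr0 mulr0.
have /andP [/andP [_ /forallP VL] _] := chosen_sideP Vsp.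
move: (VL e); rewrite eH comp_id /=.
by case: (eu e \in _); case: (ev e \in _) => //= _; rewrite ?addrN ?addNr mulr0.
Qed.

Lemma facet_normal_end e x : e \in G -> e \notin H -> x = eu e \/ x = ev e ->
  facet_normal 0 x = if special (comp H x) then (if esgn e then -1 else 1) else 0.
Proof.
move=> eG eH xe; rewrite mxE; case: ifP => // Vsp.
have /andP [_ /forallP Vcond] := chosen_sideP Vsp; have xV := comp_id H x.
move: (Vcond e); rewrite eG eH /= => /side_condP.
case=> [[-> [_ [uL vL]]]|[/negbTE -> [_ [uL vL]]]].
  have : x \in chosen_side (comp H x) :|: ~: comp H x.
    by case: xe => xE; [move: uL|move: vL]; rewrite -xE.
  by rewrite in_setU in_setC xV orbF => ->.
have : x \in ~: chosen_side (comp H x).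
  by case: xe => xE; [move: uL|move: vL]; rewrite -xE.
by rewrite inE => /negbTE ->.
Qed.

Lemma special_end e : e \in G -> e \notin H ->
  exists x, (x = eu e \/ x = ev e) /\ special (comp H x).
Proof.
move=> eG eH; have [V Vsp] := exists_special.
have /andP [/andP [LV _] /forallP Vcond] := chosen_sideP Vsp.
have Vc : V \in components H by case/and3P: Vsp.
have xsp x : x \in V -> special (comp H x) by move=> xV; rewrite -(componentsE Vc xV).
move: (Vcond e); rewrite eG eH /= => /side_condP.
case=> -[_ [uvL _]]; case: uvL => xL; [exists (eu e)|exists (ev e)|exists (eu e)|exists (ev e)];
  split; auto; apply: xsp; [exact: (subsetP LV)|exact: (subsetP LV)|..];
  by move: xL; rewrite inE => /andP [].
Qed.

Lemma facet_normal_out e : e \in G -> e \notin H -> dotv facet_normal (rho e) < 0.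
Proof.
move=> eG eH; rewrite dotv_rho.
rewrite (facet_normal_end eG eH (or_introl erefl)) (facet_normal_end eG eH (or_intror erefl)).
have [x [xe xsp]] := special_end eG eH.
by case: xe => <-; rewrite xsp /sgnR; case: (esgn e); case: (special _); lra.
Qed.

Lemma facet_normal_valid : valid G facet_normal.
Proof.
move=> e eG; have [eH|eH] := boolP (e \in H); first by rewrite facet_normal_H.
exact/ltW/facet_normal_out.
Qed.

Lemma tight_facet_normal : tight G facet_normal = H.
Proof.
have [HG _] := GH; apply/setP => e; rewrite inE.
have [eH|eH] := boolP (e \in H); first by rewrite (subsetP HG) // facet_normal_H ?eqxx.
by case: (boolP (e \in G)) => //= eG; rewrite lt_eqF // facet_normal_out.
Qed.

Lemma facet_normal_notin_orth : facet_normal \notin edge_orth R G.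
Proof.
have [HG [bicompE _]] := GH; have : ~~ (G \subset H).
  apply: contraTN isT => GH'; have GHE : G = H by apply/eqP; rewrite eqEsubset GH'.
  by move: bicompE; rewrite GHE; lia.
case/subsetPn=> e eG eH; apply/negP => /memv_edge_orth /(_ e eG).
by move/eqP; rewrite lt_eqF // facet_normal_out.
Qed.

End FacetSubgraphNormal.

Lemma facet_subgraph_normal (R : realFieldType) n (G H : {set sedge n}) :
  facet_subgraph G H ->
  exists a : 'rV[R]_n, [/\ valid G a, a \notin edge_orth R G & tight G a = H].
Proof.
move=> GH; exists (facet_normal R G H); split.
- exact: facet_normal_valid.
- exact: facet_normal_notin_orth.
- exact: tight_facet_normal.
Qed.

Section TightGrowth.
Variables (R : realFieldType) (n : nat) (G : {set sedge n}).
Local Notation rV := 'rV[R]_n.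
Local Notation rho := (@rho R n).
Local Notation dotv := (@dotv R n).
Local Notation coneP := (@coneP R n).
Local Notation edge_span := (@edge_span R n).
Local Notation edge_orth := (@edge_orth R n).

Lemma tight_shift_subset (a w : rV) t : w \in edge_orth (tight G a) ->
  tight G a \subset tight G (a + t *: w).
Proof.
move/memv_edge_orth=> wT; apply/subsetP => e eT; move: (eT); rewrite !inE.
by case/andP=> eG /eqP ae; rewrite eG dotvDl dotvZl wT // ae mulr0 add0r eqxx.
Qed.

(* Tilt the hyperplane of [a] in the direction [w] until it meets a new edge:
   [t] is the least ratio [- a.rho e / w.rho e] over the edges with [w.rho e > 0]. *)
Lemma tilt_valid (a w : rV) e0 : valid G a -> w \in edge_orth (tight G a) ->
  e0 \in G -> 0 < dotv w (rho e0) ->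
  exists2 t, 0 < t & valid G (a + t *: w) /\
    exists2 e, e \in tight G (a + t *: w) & e \notin tight G a.
Proof.
move=> Ga /memv_edge_orth wT e0G we0.
pose P e := (e \in G) && (0 < dotv w (rho e)).
have Pe0 : P e0 by rewrite /P e0G we0.
have Pa e : P e -> dotv a (rho e) < 0.
  case/andP=> eG we; apply: (valid_tight_lt0 Ga eG).
  by apply: contraTN we => /wT ->; rewrite ltxx.
pose ratio e := - dotv a (rho e) / dotv w (rho e).
case: (arg_minP ratio Pe0) => e Pe ratio_min.
have da e' t : dotv (a + t *: w) (rho e') = dotv a (rho e') + t * dotv w (rho e').
  by rewrite dotvDl dotvZl.
have /andP [eG we] := Pe.
exists (ratio e); first by rewrite divr_gt0 ?oppr_gt0 ?Pa.
split.
  move=> f fG; rewrite da; have [wf|wf] := ltP 0 (dotv w (rho f)).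
    have : ratio e <= ratio f by apply: ratio_min; rewrite /P fG wf.
    by rewrite /ratio ler_pdivlMr // => ?; lra.
  have := Ga f fG; have : ratio e * dotv w (rho f) <= 0.
    by rewrite pmulr_rle0 // divr_gt0 ?oppr_gt0 ?Pa.
  by lra.
exists e; first by rewrite inE eG da /ratio divfK ?addrN ?eqxx // gt_eqF.
by rewrite inE eG lt_eqF ?Pa.
Qed.

Lemma tight_dim_grow (a : rV) : valid G a ->
  (\dim (edge_orth G + <[a]>) < \dim (edge_orth (tight G a)))%N ->
  exists a', [/\ valid G a', a' \notin edge_orth G &
    (\dim (edge_span (tight G a)) < \dim (edge_span (tight G a')))%N].
Proof.
move=> Ga dim_lt; have [w0 w0T w0Ga] := dimv_lt_notin dim_lt.
have : [exists e in G, dotv w0 (rho e) != 0].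
  apply: contraNT w0Ga => /exists_inPn w0G.
  rewrite -[w0]addr0 memv_add ?mem0v //; apply/memv_edge_orth => e eG.
  exact/eqP/negbNE/w0G.
case/exists_inP=> e0 e0G w0e0.
pose w := if 0 < dotv w0 (rho e0) then w0 else - w0.
have wT : w \in edge_orth (tight G a) by rewrite /w; case: ifP; rewrite ?rpredN.
have wGa : w \notin (edge_orth G + <[a]>)%VS by rewrite /w; case: ifP; rewrite ?rpredN.
have we0 : 0 < dotv w (rho e0).
  rewrite /w; case: ifP => // /negbT; rewrite dotvNl oppr_gt0 -leNgt.
  by rewrite le_eqVlt (negbTE w0e0).
have [t t0 [Ga' [e eT' eT]]] := tilt_valid Ga wT e0G we0.
exists (a + t *: w); split=> //.
  apply: contra wGa => a'G; have -> : w = t^-1 *: (a + t *: w) - t^-1 *: a.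
    by rewrite scalerDr scalerA mulVf ?gt_eqF // scale1r addrAC subrr add0r.
  by rewrite memv_add ?rpredZ ?rpredN ?memvZ ?memv_line.
apply: (dimv_lt_mem (v := rho e)); first exact/edge_spanS/tight_shift_subset.
  by apply: memv_edge_span.
have eG : e \in G := subsetP (tight_subset G _) e eT'.
apply/negP => /(edge_orth_dotv (memv_tight_orth G a)) /eqP.
by rewrite (lt_eqF (valid_tight_lt0 Ga eG eT)).
Qed.

Lemma facet_tight_dim (a : rV) : valid G a -> a \notin edge_orth G ->
  facet (coneP G) (coneP (tight G a)) ->
  (\dim (edge_span (tight G a))).+1 = \dim (edge_span G).
Proof.
move=> Ga aG [_ Fmax]; apply/eqP; rewrite eqn_leq tight_span_lt //=.
rewrite leqNgt; apply/negP => dim_gap.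
have := dim_edge_span_orth R (tight G a); have := dim_edge_span_orth R G.
have := dimv_add_leqif (edge_orth G) <[a]>; rewrite dim_vline => -[add_le _].
move=> UWG UWT; have [|a' [Ga' a'G dim_lt]] := tight_dim_grow Ga.
  by case: (a != 0) add_le => /= add_le; lia.
have /indep_coneP := Fmax _ (proper_face_valid Ga' a'G) _ (iffRL (indep_coneP _ _ _) (leqnn _)).
by rewrite leqNgt dim_lt.
Qed.

End TightGrowth.

Section TightSubgraph.
Variables (R : realFieldType) (n : nat) (G : {set sedge n}).
Local Notation rV := 'rV[R]_n.
Local Notation rho := (@rho R n).
Local Notation dotv := (@dotv R n).
Local Notation edge_orth := (@edge_orth R n).
Local Notation sign_vec := (@sign_vec R n).
Implicit Types (V L : {set 'I_n}) (a : rV).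

Lemma sign_vec_side_cond V L e : L \subset V ->
  0 < dotv (sign_vec V L) (rho e) -> side_cond V L e.
Proof.
move=> LV; rewrite dotv_rho !sign_vecE /side_cond !in_setU !in_setC !in_setD.
move: (subsetP LV (eu e)) (subsetP LV (ev e)); rewrite /sgnR.
case: (esgn e); case: (eu e \in L); case: (eu e \in V); case: (ev e \in L);
  case: (ev e \in V) => //= uLV vLV;
  try (by move: (uLV isT)); try (by move: (vLV isT)); try lra;
  by move=> _; first [left; do !split; auto | right; do !split; auto].
Qed.

Lemma comp_of_G_tight a V L : V \in components (tight G a) ->
  is_bipartition (tight G a) V L -> sign_vec V L \in edge_orth G ->
  comp_of_G G (tight G a) V.
Proof.
set H := tight G a => Vc VL /memv_edge_orth bG.
have Gstep e : e \in G -> ((eu e \in V) = (ev e \in V)) /\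
    ((eu e \in V) -> (eu e \in L) != (ev e \in L)).
  have := dotv_rho_eq0 (bG e _); rewrite !sign_vecE => /[apply].
  by case: (eu e \in V); case: (ev e \in V); case: (eu e \in L); case: (ev e \in L) => //=; lra.
have GH e : e \in G -> eu e \in V -> e \in H.
  move=> eG uV; rewrite inE eG dotv_rho; have [uvV uvL] := Gstep e eG.
  have VuE := componentsE Vc uV.
  have uL : is_bipartition H (comp H (eu e)) L by rewrite -VuE.
  have vu : ev e \in comp H (eu e) by rewrite -VuE -uvV.
  rewrite (edge_orth_alternating (memv_tight_orth G a) uL vu); move: (uvL uV).
  by case: (eu e \in L); case: (ev e \in L) => //= _; rewrite ?addrN ?addNr mulr0.
apply/andP; split; last by apply/forallP => e; apply/implyP => eG; apply/implyP/GH.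
have [i iV] := set0Pn _ (components_neq0 Vc); have ViE := componentsE Vc iV.
suff -> : V = comp G i by apply: mem_components.
apply/setP => j; apply/idP/idP.
  rewrite ViE inE => ij; rewrite inE; apply: connect_sub ij => y x /adjP [e eH exy].
  apply/connect1/existsP; exists e; rewrite (subsetP (tight_subset G a)) //=.
  by case: exy => -[-> ->]; rewrite !eqxx ?orbT.
move: j; apply: comp_ind => // y x _ _ /adjP [e eG exy].
by have [uvV _] := Gstep e eG; case: exy => -[<- <-]; rewrite uvV.
Qed.

Lemma edge_orth_tight a : a \notin edge_orth G ->
  bicomp (tight G a) = (bicomp G).+1 -> (edge_orth G + <[a]>)%VS = edge_orth (tight G a).
Proof.
move=> aG bicompE; have sub : (edge_orth G + <[a]> <= edge_orth (tight G a))%VS.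
  by rewrite subv_add edge_orthS ?tight_subset // -memvE memv_tight_orth.
apply/eqP; rewrite eqEdim sub !dim_edge_orth bicompE.
have := dimv_lt_mem (addvSl (edge_orth G) <[a]>) (memv_add (mem0v _) (memv_line a)).
by rewrite add0r dim_edge_orth => /(_ aG).
Qed.

Lemma facet_subgraph_tight a : valid G a -> a \notin edge_orth G ->
  bicomp (tight G a) = (bicomp G).+1 -> facet_subgraph G (tight G a).
Proof.
set H := tight G a => Ga aG bicompE; split; first exact: tight_subset.
split=> // V Vc Vbip VG; set L := rooted_side H V.
have VL : is_bipartition H V L by apply: rooted_side_bipartition.
have LV : L \subset V by case/andP: VL.
have := sign_vec_orth R Vc VL; rewrite -edge_orth_tight //.
case/memv_addP => u uG [_ /vlineP [lam ->] bE].
have [lam0|lam0] := eqVneq lam 0.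
  have bG : sign_vec V L \in edge_orth G by rewrite bE lam0 scale0r addr0.
  by case/negP: VG; apply: comp_of_G_tight Vc VL bG.
have bGH e : e \in G -> e \notin H ->
    dotv (sign_vec V L) (rho e) = lam * dotv a (rho e) /\ dotv a (rho e) < 0.
  move=> eG eH; rewrite bE dotvDl dotvZl (iffLR (memv_edge_orth _ _) uG) // add0r.
  by split; last exact: valid_tight_lt0 Ga eG eH.
exists (if 0 < lam then V :\: L else L); split; first by case: ifP => // _; apply: bipartitionC.
move=> e eG eH; have [be ae] := bGH e eG eH; case: ifP => lam_pos.
  apply: sign_vec_side_cond; first exact: subsetDl.
  by rewrite sign_vecC // dotvNl be oppr_gt0 pmulr_rlt0.
apply: sign_vec_side_cond => //; rewrite be nmulr_rgt0 //.
by rewrite lt_neqAle lam0 leNgt lam_pos.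
Qed.

End TightSubgraph.

Unset Implicit Arguments.

Theorem mainTheorem3 (R : realFieldType) (n : nat) (G : {set sedge n})
  (hG : signed_graph G) (F : 'rV[R]_n -> Prop) :
  facet (@coneP R n G) F <->
  exists H : {set sedge n}, facet_subgraph G H /\ same_set (@coneP R n H) F.
Proof.
split=> [FG|[H [GH HF]]].
  have [a [Ga aG FE]] := proper_face_tight FG.1.
  exists (tight G a); split; last by move=> x; rewrite FE.
  apply: facet_subgraph_tight => //; apply/facet_dim_bicomp.
  exact: facet_tight_dim Ga aG (facet_ext FE FG).
have [a [Ga aG aH]] := facet_subgraph_normal R GH.
apply: facet_ext HF _; rewrite -aH; apply: facet_valid Ga aG _.
by apply/facet_dim_bicomp; rewrite aH; case: GH => _ [].
Qed.
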